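(* Let $t\mapsto\zeta(t)=(\xi(t),\eta(t))$, $t\in I$, be a solution of the alternative system (Alt) such that for all $t\in I$: $f_{\mathrm{holdup}}'(L^j(t))\neq0$ for $j=1,\dots,S-1$ and $\sum_{i=1}^C\partial_Tf_{\mathrm{vle},i}(P(t),T^j(t),\mathbf x^j(t))\neq0$ for $j=1,\dots,S$. Then the Jacobian $D_\eta g(\zeta(t))$ is non-singular for every $t\in I$ if and only if for every $t\in I$ $-\epsilon f_{\mathrm{hl}}(T^S,\mathbf x^S)-\epsilon\,\mathbf a(P,T^S,\mathbf x^S)\cdot(\mathbf y^S-\mathbf x^S)-(1-\epsilon)f_{\mathrm{hl}}(T^{\mathrm{cond}},\mathbf y^S)+f_{\mathrm{hv}}(T^S,\mathbf y^S)\neq0$ and, for every $j\in\{S-1,\dots,1\}$, $-f_{\mathrm{hl}}(T^j,\mathbf x^j)-\mathbf a(P,T^j,\mathbf x^j)\cdot(\mathbf y^j-\mathbf x^j)+f_{\mathrm{hv}}(T^j,\mathbf y^j)\neq0$ (all quantities evaluated at time $t$).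
   Context: Fix integers $S\ge 2$, $C\ge 2$ and an interval $I\subset\mathbb R$. Given are real functions $f_{\mathrm{vle},i}(P,T,\mathbf x)$ ($i=1,\dots,C$) and $f_{\mathrm{hl}}(T,\mathbf x)$ that are twice continuously differentiable, and continuously differentiable $f_{\mathrm{hv}}(T,\mathbf y)$, $f_{\mathrm{holdup}}(L)$. Controls are continuously differentiable real functions $\epsilon,P,Q,T^{\mathrm{cond}}$ on $I$. State variables: $n^j,H^j,T^j,V^j$, $\mathbf x^j,\mathbf y^j\in\mathbb R^C$ ($j=1,\dots,S$), $L^j$ ($j=1,\dots,S-1$); a solution is a tuple of continuously differentiable state functions satisfying all equations at every $t\in I$. ''$2\le j\le S-1$'' marks middle-stage equations. Wherever $\sum_i\partial_Tf_{\mathrm{vle},i}(P,T,\mathbf x)\neq0$ define $\mathbf a(P,T,\mathbf x):=\nabla_{\mathbf x}f_{\mathrm{hl}}(T,\mathbf x)-\partial_Tf_{\mathrm{hl}}(T,\mathbf x)\frac{\sum_i\nabla_{\mathbf x}f_{\mathrm{vle},i}(P,T,\mathbf x)}{\sum_i\partial_Tf_{\mathrm{vle},i}(P,T,\mathbf x)}$, $b(P,T,\mathbf x):=-\partial_Tf_{\mathrm{hl}}(T,\mathbf x)\frac{\sum_i\partial_Pf_{\mathrm{vle},i}(P,T,\mathbf x)}{\sum_i\partial_Tf_{\mathrm{vle},i}(P,T,\mathbf x)}$. System (Alt) consists of (TM) $\dot n^1=L^1-V^1$; $\dot n^j=L^j-V^j-L^{j-1}+V^{j-1}$ ($2\le j\le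 S-1$); $\dot n^S=-\epsilon V^S-L^{S-1}+V^{S-1}$; (CM$_0$) for $i=1,\dots,C-1$: $\dot x_i^1=\big(L^1(x_i^2-x_i^1)-V^1(y_i^1-x_i^1)\big)/n^1$; $\dot x_i^j=\big(L^j(x_i^{j+1}-x_i^j)-V^j(y_i^j-x_i^j)+V^{j-1}(y_i^{j-1}-x_i^j)\big)/n^j$ ($2\le j\le S-1$); $\dot x_i^S=\big(\epsilon V^S(x_i^S-y_i^S)+V^{S-1}(y_i^{S-1}-x_i^S)\big)/n^S$; and the algebraic equations $g=0$ where (left minus right side): $\mathrm{aebal}^1=(L^1-V^1)f_{\mathrm{hl}}(T^1,\mathbf x^1)+\mathbf a(P,T^1,\mathbf x^1)\cdot\big(L^1(\mathbf x^2-\mathbf x^1)-V^1(\mathbf y^1-\mathbf x^1)\big)+n^1b(P,T^1,\mathbf x^1)\dot P-\big(L^1f_{\mathrm{hl}}(T^2,\mathbf x^2)-V^1f_{\mathrm{hv}}(T^1,\mathbf y^1)+Q\big)$; for $2\le j\le S-1$: $\mathrm{aebal}^j=(L^j-V^j-L^{j-1}+V^{j-1})f_{\mathrm{hl}}(T^j,\mathbf x^j)+\mathbf a(P,T^j,\mathbf x^j)\cdot\big(L^j(\mathbf x^{j+1}-\mathbf x^j)-V^j(\mathbf y^j-\mathbf x^j)+V^{j-1}(\mathbf y^{j-1}-\mathbf x^j)\big)+n^jb(P,T^j,\mathbf x^j)\dot P-\big(L^jf_{\mathrm{hl}}(T^{j+1},\mathbf x^{j+1})-V^jf_{\mathrm{hv}}(T^j,\mathbf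 y^j)-L^{j-1}f_{\mathrm{hl}}(T^j,\mathbf x^j)+V^{j-1}f_{\mathrm{hv}}(T^{j-1},\mathbf y^{j-1})\big)$; $\mathrm{aebal}^S=(-\epsilon V^S-L^{S-1}+V^{S-1})f_{\mathrm{hl}}(T^S,\mathbf x^S)+\mathbf a(P,T^S,\mathbf x^S)\cdot\big(-\epsilon V^S(\mathbf y^S-\mathbf x^S)+V^{S-1}(\mathbf y^{S-1}-\mathbf x^S)\big)+n^Sb(P,T^S,\mathbf x^S)\dot P-\big((1-\epsilon)V^Sf_{\mathrm{hl}}(T^{\mathrm{cond}},\mathbf y^S)-V^Sf_{\mathrm{hv}}(T^S,\mathbf y^S)-L^{S-1}f_{\mathrm{hl}}(T^S,\mathbf x^S)+V^{S-1}f_{\mathrm{hv}}(T^{S-1},\mathbf y^{S-1})\big)$; $\mathrm{ydef}_i^j=y_i^j-f_{\mathrm{vle},i}(P,T^j,\mathbf x^j)$, $\mathbf{ydef}^j=(\mathrm{ydef}^j_1,\dots,\mathrm{ydef}^j_C)$; $\mathrm{edef}^j=H^j-n^jf_{\mathrm{hl}}(T^j,\mathbf x^j)$; $\mathrm{ysum}^j=\sum_{i=1}^Cf_{\mathrm{vle},i}(P,T^j,\mathbf x^j)-1$; $\mathrm{xsum}^j=x_C^j-1+\sum_{i=1}^{C-1}x_i^j$; $\mathrm{hold}^j=n^j-f_{\mathrm{holdup}}(L^{j-1})$ ($j=2,\dots,S$); ordered as $g=(\mathrm{aebal}^S,\dots,\mathrm{aebal}^1,\mathbf{ydef}^1,\dots,\mathbf{ydef}^S,\mathrm{edef}^1,\dots,\mathrm{edef}^S,\mathrm{ysum}^1,\dots,\mathrm{ysum}^S,\mathrm{xsum}^1,\dots,\mathrm{xsum}^S,\mathrm{hold}^2,\dots,\mathrm{hold}^S)$.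 Differential variables $\xi=(n^1,\dots,n^S,\hat{\mathbf x}^1,\dots,\hat{\mathbf x}^S)$, $\hat{\mathbf x}^j=(x^j_1,\dots,x^j_{C-1})$; algebraic variables $\eta=(V^S,\dots,V^1,\mathbf y^1,\dots,\mathbf y^S,H^1,\dots,H^S,T^1,\dots,T^S,x_C^1,\dots,x_C^S,L^1,\dots,L^{S-1})$. $D_\eta g$ is the Jacobian of $g$ with respect to $\eta$ (with $\xi$ and controls held fixed). *)

From HB Require Import structures.
From mathcomp Require Import all_boot all_order all_algebra.
From mathcomp Require Import all_classical all_reals all_analysis.
Set Implicit Arguments. Unset Strict Implicit. Unset Printing Implicit Defensive.
Import Order.TTheory GRing.Theory Num.Theory.
Import numFieldNormedType.Exports.
Local Open Scope classical_set_scope.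
Local Open Scope ring_scope.

Section Regularity.
Variable R : realType.

Definition partial m (F : 'rV[R]_m -> R) (k : 'I_m) (z : 'rV[R]_m) : R :=
  derive1 (fun h : R => F (z + h *: delta_mx 0 k)) 0.

Definition C1 m (F : 'rV[R]_m -> R) : Prop :=
  (forall k z, derivable (fun h : R => F (z + h *: delta_mx 0 k)) 0 1) /\
  (forall k, continuous (partial F k)).

Definition C2 m (F : 'rV[R]_m -> R) : Prop :=
  C1 F /\ (forall k, C1 (partial F k)).

Definition C1fun (f : R -> R) : Prop :=
  (forall z, derivable f z 1) /\ continuous (derive1 f).

Definition uncurry3 C (f : R -> R -> 'rV[R]_C -> R) : 'rV[R]_(1 + (1 + C)) -> R :=
  fun z => f (lsubmx z ord0 ord0) (lsubmx (rsubmx z) ord0 ord0) (rsubmx (rsubmx z)).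
Definition uncurry2 C (f : R -> 'rV[R]_C -> R) : 'rV[R]_(1 + C) -> R :=
  fun z => f (lsubmx z ord0 ord0) (rsubmx z).

(** Derivative of a real function relative to a set I (one-sided at endpoints
    of an interval). *)
Definition dquot (f : R -> R) (t : R) : R -> R := fun h => h^-1 * (f (h + t) - f t).
Definition derivI (I : set R) (f : R -> R) (t : R) : R :=
  lim (dquot f t @ within (fun h => I (h + t)) 0^').
Definition C1_on (I : set R) (f : R -> R) : Prop :=
  (forall t, I t -> exists d : R, dquot f t @ within (fun h => I (h + t)) 0^' --> d) /\
  {within I, continuous (derivI I f)}.

End Regularity.

Section Column.
Variable R : realType.
Variables S C : nat.
(** fvle i is f_vle,(i+1); fhl, fhv, fholdup as in the paper. *)
Variable fvle : 'I_C -> R -> R -> 'rV[R]_C -> R.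
Variable fhl : R -> 'rV[R]_C -> R.
Variable fhv : R -> 'rV[R]_C -> R.
Variable fholdup : R -> R.

Definition dotv (u v : 'rV[R]_C) : R := \sum_(i < C) u ord0 i * v ord0 i.

Definition dT3 (f : R -> R -> 'rV[R]_C -> R) P T x : R := derive1 (fun T' => f P T' x) T.
Definition dP3 (f : R -> R -> 'rV[R]_C -> R) P T x : R := derive1 (fun P' => f P' T x) P.
Definition gradx3 (f : R -> R -> 'rV[R]_C -> R) P T x : 'rV[R]_C :=
  \row_(i < C) derive1 (fun h : R => f P T (x + h *: delta_mx 0 i)) 0.
Definition dT2 (f : R -> 'rV[R]_C -> R) T x : R := derive1 (fun T' => f T' x) T.
Definition gradx2 (f : R -> 'rV[R]_C -> R) T x : 'rV[R]_C :=
  \row_(i < C) derive1 (fun h : R => f T (x + h *: delta_mx 0 i)) 0.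

Definition sdT P T x : R := \sum_(i < C) dT3 (fvle i) P T x.

Definition avec P T x : 'rV[R]_C :=
  gradx2 fhl T x - (dT2 fhl T x / sdT P T x) *: (\sum_(i < C) gradx3 (fvle i) P T x).
Definition bsc P T x : R :=
  - dT2 fhl T x * ((\sum_(i < C) dP3 (fvle i) P T x) / sdT P T x).

(** Values of the algebraic variables (stages 1-based, components 1-based). *)
Record algv := AlgV {
  aV : nat -> R; ay : nat -> nat -> R; aH : nat -> R;
  aT : nat -> R; axC : nat -> R; aL : nat -> R }.

(** Index type of eta (and of g), in the order of the paper:
    V^S..V^1 | y^1..y^S | H^1..H^S | T^1..T^S | x_C^1..x_C^S | L^1..L^{S-1}. *)
Definition Idx := ('I_S + 'I_S * 'I_C + 'I_S + 'I_S + 'I_S + 'I_S.-1)%type.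

Section AtPoint.
(* controls and Pdot at the given time, differential variables n, xh
   (xh j i = x_i^j for 1 <= i <= C-1) *)
Variables (eps P Q Tc Pdot : R) (n : nat -> R) (xh : nat -> nat -> R).

Definition xrow (e : algv) (j : nat) : 'rV[R]_C :=
  \row_(i < C) (if i.+1 == C then axC e j else xh j i.+1).
Definition yrow (e : algv) (j : nat) : 'rV[R]_C := \row_(i < C) ay e j i.+1.

Definition aebal (e : algv) (j : nat) : R :=
  let x := xrow e in let y := yrow e in
  let V := aV e in let L := aL e in let T := aT e in
  if j == 1%N then
    (L 1 - V 1) * fhl (T 1) (x 1)
    + dotv (avec P (T 1) (x 1)) (L 1 *: (x 2 - x 1) - V 1 *: (y 1 - x 1))
    + n 1 * bsc P (T 1) (x 1) * Pdot
    - (L 1 * fhl (T 2) (x 2) - V 1 * fhv (T 1) (y 1) + Q)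
  else if j == S then
    (- eps * V S - L S.-1 + V S.-1) * fhl (T S) (x S)
    + dotv (avec P (T S) (x S))
        (- (eps * V S) *: (y S - x S) + V S.-1 *: (y S.-1 - x S))
    + n S * bsc P (T S) (x S) * Pdot
    - ((1 - eps) * V S * fhl Tc (y S) - V S * fhv (T S) (y S)
       - L S.-1 * fhl (T S) (x S) + V S.-1 * fhv (T S.-1) (y S.-1))
  else
    (L j - V j - L j.-1 + V j.-1) * fhl (T j) (x j)
    + dotv (avec P (T j) (x j))
        (L j *: (x j.+1 - x j) - V j *: (y j - x j) + V j.-1 *: (y j.-1 - x j))
    + n j * bsc P (T j) (x j) * Pdot
    - (L j * fhl (T j.+1) (x j.+1) - V j * fhv (T j) (y j)
       - L j.-1 * fhl (T j) (x j) + V j.-1 * fhv (T j.-1) (y j.-1)).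

(** ydef_(i+1)^j for i : 'I_C *)
Definition ydef (e : algv) (j : nat) (i : 'I_C) : R :=
  ay e j i.+1 - fvle i P (aT e j) (xrow e j).
Definition edef (e : algv) (j : nat) : R := aH e j - n j * fhl (aT e j) (xrow e j).
Definition ysum (e : algv) (j : nat) : R :=
  \sum_(i < C) fvle i P (aT e j) (xrow e j) - 1.
Definition xsum (e : algv) (j : nat) : R :=
  axC e j - 1 + \sum_(1 <= i < C) xh j i.
Definition hold (e : algv) (j : nat) : R := n j - fholdup (aL e j.-1).

(** The algebraic equations g, indexed like eta:
    aebal^S..aebal^1 | ydef^1..ydef^S | edef | ysum | xsum | hold^2..hold^S. *)
Definition gres (e : algv) (k : Idx) : R :=
  match k with
  | inl (inl (inl (inl (inl k)))) => aebal e (S - k)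
  | inl (inl (inl (inl (inr (k, i))))) => ydef e k.+1 i
  | inl (inl (inl (inr k))) => edef e k.+1
  | inl (inl (inr k)) => ysum e k.+1
  | inl (inr k) => xsum e k.+1
  | inr k => hold e k.+2
  end.

Definition updn (f : nat -> R) (j : nat) (h : R) : nat -> R :=
  fun m => if m == j then f m + h else f m.
Definition updn2 (f : nat -> nat -> R) (j i : nat) (h : R) : nat -> nat -> R :=
  fun m l => if (m == j) && (l == i) then f m l + h else f m l.

Definition pert (e : algv) (k : Idx) (h : R) : algv :=
  match k with
  | inl (inl (inl (inl (inl k)))) =>
      AlgV (updn (aV e) (S - k) h) (ay e) (aH e) (aT e) (axC e) (aL e)
  | inl (inl (inl (inl (inr (k, i))))) =>
      AlgV (aV e) (updn2 (ay e) k.+1 i.+1 h) (aH e) (aT e) (axC e) (aL e)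
  | inl (inl (inl (inr k))) =>
      AlgV (aV e) (ay e) (updn (aH e) k.+1 h) (aT e) (axC e) (aL e)
  | inl (inl (inr k)) =>
      AlgV (aV e) (ay e) (aH e) (updn (aT e) k.+1 h) (axC e) (aL e)
  | inl (inr k) =>
      AlgV (aV e) (ay e) (aH e) (aT e) (updn (axC e) k.+1 h) (aL e)
  | inr k =>
      AlgV (aV e) (ay e) (aH e) (aT e) (axC e) (updn (aL e) k.+1 h)
  end.

Definition jac (e : algv) : 'M[R]_#|{: Idx}| :=
  \matrix_(r, c) derive1 (fun h : R => gres (pert e (enum_val c) h) (enum_val r)) 0.

End AtPoint.

Section Solution.
Variables (I : set R) (eps P Q Tc : R -> R).
Variables (n V H T L : nat -> R -> R) (x y : nat -> nat -> R -> R).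
(* x j i t = x_i^j(t), y j i t = y_i^j(t), 1-based j and i *)

Definition alg_at (t : R) : algv :=
  AlgV (fun j => V j t) (fun j i => y j i t) (fun j => H j t)
       (fun j => T j t) (fun j => x j C t) (fun j => L j t).
Definition n_at (t : R) : nat -> R := fun j => n j t.
Definition x_at (t : R) : nat -> nat -> R := fun j i => x j i t.
Definition Pdot_at (t : R) : R := derivI I P t.

Definition xvec (j : nat) (t : R) : 'rV[R]_C := \row_(i < C) x j i.+1 t.
Definition yvec (j : nat) (t : R) : 'rV[R]_C := \row_(i < C) y j i.+1 t.

Definition jac_at (t : R) : 'M[R]_#|{: Idx}| :=
  jac (eps t) (P t) (Q t) (Tc t) (Pdot_at t) (n_at t) (x_at t) (alg_at t).

Definition is_solution : Prop :=
  (forall j, (1 <= j <= S)%N ->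
     [/\ C1_on I (n j), C1_on I (H j), C1_on I (T j) & C1_on I (V j)]) /\
  (forall j i, (1 <= j <= S)%N -> (1 <= i <= C)%N ->
     C1_on I (x j i) /\ C1_on I (y j i)) /\
  (forall j, (1 <= j <= S.-1)%N -> C1_on I (L j)) /\
  (forall t, I t ->
    derivI I (n 1) t = L 1 t - V 1 t /\
    (forall j, (2 <= j <= S.-1)%N ->
       derivI I (n j) t = L j t - V j t - L j.-1 t + V j.-1 t) /\
    derivI I (n S) t = - eps t * V S t - L S.-1 t + V S.-1 t /\
    (forall i, (1 <= i <= C.-1)%N ->
      derivI I (x 1 i) t =
        (L 1 t * (x 2 i t - x 1 i t) - V 1 t * (y 1 i t - x 1 i t)) / n 1 t /\
      (forall j, (2 <= j <= S.-1)%N ->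
        derivI I (x j i) t =
          (L j t * (x j.+1 i t - x j i t) - V j t * (y j i t - x j i t)
           + V j.-1 t * (y j.-1 i t - x j i t)) / n j t) /\
      derivI I (x S i) t =
        (eps t * V S t * (x S i t - y S i t)
         + V S.-1 t * (y S.-1 i t - x S i t)) / n S t) /\
    (forall k : Idx,
       gres (eps t) (P t) (Q t) (Tc t) (Pdot_at t) (n_at t) (x_at t) (alg_at t) k = 0)).

End Solution.

End Column.

From Pilot Require Import Defs.
From HB Require Import structures.
From mathcomp Require Import all_boot all_order all_algebra.
From mathcomp Require Import all_classical all_reals all_analysis.
From mathcomp Require Import ring zify.
Set Implicit Arguments. Unset Strict Implicit. Unset Printing Implicit Defensive.
Import Order.TTheory GRing.Theory Num.Theory.
Import numFieldNormedType.Exports.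
Local Open Scope classical_set_scope.
Local Open Scope ring_scope.

(* Listing eta as V^S..V^1, y, H, T, x_C, L and g as aebal^S..aebal^1, ydef, edef, ysum,
   xsum, hold makes D_eta g upper triangular: aebal^j involves V^j and V^(j-1) but no V^j'
   with j' > j, ydef^j, edef^j and ysum^j involve (besides their own variable) only T^j and
   x_C^j, xsum^j only x_C^j, and hold^j only L^(j-1).  The determinant is therefore the
   product of the diagonal entries: 1 for y, H and x_C, sum_i d_T f_vle,i for T^j,
   -f_holdup'(L^j) for L^j, and d aebal^j / d V^j for V^j, which is exactly the expression
   of the theorem since aebal^j is affine in V^j.  The T- and L-entries never vanish by
   hypothesis. *)

Section Derive1AtZero.
Variable R : realType.
Implicit Types (f g : R -> R) (a b c : R).

Lemma derive1_shift g c : derive1 (fun h => g (h + c)) 0 = derive1 g c.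
Proof.
rewrite /derive1.
suff -> : (fun h => h^-1 *: ((fun h => g (h + c)) (h + 0) - (fun h => g (h + c)) 0))
  = (fun h => h^-1 *: (g (h + c) - g c)) by [].
by apply/funext => h; rewrite /= !add0r addr0.
Qed.

Lemma derivable_shift g c : derivable g c 1 -> derivable (fun h => g (h + c)) 0 1.
Proof.
rewrite /derivable /=.
suff -> : (fun h => h^-1 *: (g (h *: 1 + 0 + c) - g (0 + c)))
  = (fun h => h^-1 *: (g (h *: 1 + c) - g c)) by [].
by apply/funext => h; rewrite /= !add0r addr0.
Qed.

Lemma derive1_affine f a b : (forall h, f h = a + h * b) -> derive1 f 0 = b.
Proof.
move=> fE; have -> : f = cst a + b \*: id by apply/funext => h; rewrite fE mulrC.
have Hd := is_deriveD (is_derive_cst a (0:R) 1) (is_deriveZ b (is_derive_id (0:R) 1)).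
by rewrite derive1E (@derive_val _ _ _ _ _ _ _ Hd) add0r; exact: mulr1.
Qed.

Lemma derive1_shift_subr g a c : derivable g c 1 ->
  derive1 (fun h => g (c + h) - a) 0 = derive1 g c.
Proof.
move=> dg; rewrite -(derive1_shift g c) !derive1E.
have -> : (fun h => g (c + h) - a) = (fun h => g (h + c)) - cst a.
  by apply/funext => h; rewrite /= [c + h]addrC.
by rewrite deriveB ?derive_cst ?subr0 //; exact: derivable_shift.
Qed.

Lemma derive1_shift_subl g a c : derivable g c 1 ->
  derive1 (fun h => a - g (c + h)) 0 = - derive1 g c.
Proof.
move=> dg; rewrite -(derive1_shift g c) !derive1E.
have -> : (fun h => a - g (c + h)) = cst a - (fun h => g (h + c)).
  by apply/funext => h; rewrite /= [c + h]addrC.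
by rewrite deriveB ?derive_cst ?sub0r //; exact: derivable_shift.
Qed.

Lemma fct_sum_pointwise m (F : 'I_m -> R -> R) :
  (fun z => \sum_(i < m) F i z) = \sum_(i < m) F i.
Proof. by apply/funext => z; rewrite fct_sumE. Qed.

Lemma derivable_sum_pointwise m (F : 'I_m -> R -> R) c :
  (forall i, derivable (F i) c 1) -> derivable (fun z => \sum_(i < m) F i z) c 1.
Proof. by move=> dF; rewrite fct_sum_pointwise; exact: derivable_sum. Qed.

Lemma derive1_sum m (F : 'I_m -> R -> R) c :
  (forall i, derivable (F i) c 1) ->
  derive1 (fun z => \sum_(i < m) F i z) c = \sum_(i < m) derive1 (F i) c.
Proof.
move=> dF; rewrite fct_sum_pointwise derive1E derive_sum //.
by under eq_bigr do rewrite -derive1E.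
Qed.

End Derive1AtZero.

Lemma enum_rank_index (T : finType) (x : T) : (enum_rank x : nat) = index x (enum T).
Proof.
rewrite -{2}(nth_enum_rank x x) index_uniq ?enum_uniq //.
by rewrite -cardE ltn_ord.
Qed.

Lemma enum_rank_ordE m (k : 'I_m) : (enum_rank k : nat) = k.
Proof. by rewrite enum_rank_ord. Qed.

Lemma enum_sumE (A B : finType) :
  enum {: A + B} = map inl (enum A) ++ map inr (enum B).
Proof. by rewrite !enumT [in LHS]unlock. Qed.

Lemma enum_rank_inl (A B : finType) (a : A) :
  (enum_rank (inl a : A + B) : nat) = enum_rank a.
Proof.
rewrite !enum_rank_index enum_sumE index_cat (mem_map (@inl_inj _ _)) mem_enum.
by rewrite index_map //; apply: inl_inj.
Qed.

Lemma enum_rank_inr (A B : finType) (b : B) :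
  (enum_rank (inr b : A + B) : nat) = (#|A| + enum_rank b)%N.
Proof.
rewrite !enum_rank_index enum_sumE index_cat.
have -> : (inr b \in [seq inl x | x <- enum A]) = false by apply/negbTE/mapP => -[].
by rewrite size_map -cardE index_map //; apply: inr_inj.
Qed.

Lemma det_enum_trig (K : comNzRingType) (T : finType) (f : T -> T -> K) :
  (forall r c, (enum_rank c < enum_rank r)%N -> f r c = 0) ->
  \det (\matrix_(r, c) f (enum_val r) (enum_val c) : 'M[K]_#|{: T}|) = \prod_(x : T) f x x.
Proof.
move=> f_trig; rewrite -det_tr det_trig; last first.
  by apply/is_trig_mxP => i j lt_ij; rewrite !mxE f_trig ?enum_valK.
rewrite (reindex (@enum_rank T)) /=; last exact: onW_bij (enum_rank_bij T).
by apply: eq_bigr => x _; rewrite !mxE enum_rankK.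
Qed.

Lemma uncurry3_shift_T (R : realType) C (f : R -> R -> 'rV[R]_C -> R) P T x (h : R) :
  uncurry3 f (row_mx (const_mx P : 'rV_1) (row_mx (const_mx T : 'rV_1) x)
              + h *: delta_mx 0 (rshift 1 (lshift C ord0))) = f P (h + T) x.
Proof.
rewrite delta_mx_rshift delta_mx_lshift !scale_row_mx !add_row_mx /uncurry3.
by rewrite !row_mxKl !row_mxKr !scaler0 !addr0 (@row_mxKl _ 1 1 C) !mxE mulr1 addrC.
Qed.

Lemma C1_uncurry3_derivable_T (R : realType) C (f : R -> R -> 'rV[R]_C -> R) P T x :
  C1 (uncurry3 f) -> derivable (fun T' => f P T' x) T 1.
Proof.
move=> [df _]; rewrite /derivable /=.
have := df (rshift 1 (lshift C ord0))
           (row_mx (const_mx P : 'rV_1) (row_mx (const_mx T : 'rV_1) x)).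
rewrite /derivable /=.
set F := (fun h => _); set G := (fun h => _); suff -> : F = G by [].
by apply/funext => h; rewrite /F /G /= !uncurry3_shift_T addr0 add0r.
Qed.

Section Column.
Variables (R : realType) (S C : nat).
Hypothesis S_ge2 : (2 <= S)%N.
Variable fvle : 'I_C -> R -> R -> 'rV[R]_C -> R.
Variables fhl fhv : R -> 'rV[R]_C -> R.
Variable fholdup : R -> R.
Hypothesis fvle_C1 : forall i, C1 (uncurry3 (fvle i)).
Hypothesis fholdup_derivable : forall z, derivable fholdup z 1.
Variables eps P Q Tc Pdot : R.
Variables (n : nat -> R) (xh : nat -> nat -> R).

Local Notation g := (gres fvle fhl fhv fholdup eps P Q Tc Pdot n xh).
Local Notation aebal := (aebal S fvle fhl fhv eps P Q Tc Pdot n xh).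
Local Notation xrow := (Defs.xrow C xh).
Local Notation yrow := (yrow C).

Local Notation iV k := (inl (inl (inl (inl (inl k)))) : Idx S C).
Local Notation iy p := (inl (inl (inl (inl (inr p)))) : Idx S C).
Local Notation iH k := (inl (inl (inl (inr k))) : Idx S C).
Local Notation iT k := (inl (inl (inr k)) : Idx S C).
Local Notation ixC k := (inl (inr k) : Idx S C).
Local Notation iL k := (inr k : Idx S C).

Lemma enum_rank_iV (k : 'I_S) : (enum_rank (iV k) : nat) = k.
Proof. by rewrite !enum_rank_inl enum_rank_ordE. Qed.
Lemma enum_rank_iy (p : 'I_S * 'I_C) : (enum_rank (iy p) : nat) = (S + enum_rank p)%N.
Proof. by rewrite !enum_rank_inl enum_rank_inr card_ord. Qed.
Lemma enum_rank_iH (k : 'I_S) : (enum_rank (iH k) : nat) = (S + S * C + k)%N.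
Proof. by rewrite !enum_rank_inl enum_rank_inr enum_rank_ordE card_sum card_prod !card_ord. Qed.
Lemma enum_rank_iT (k : 'I_S) : (enum_rank (iT k) : nat) = (S + S * C + S + k)%N.
Proof. by rewrite !enum_rank_inl enum_rank_inr enum_rank_ordE !card_sum card_prod !card_ord. Qed.
Lemma enum_rank_ixC (k : 'I_S) : (enum_rank (ixC k) : nat) = (S + S * C + S + S + k)%N.
Proof. by rewrite !enum_rank_inl enum_rank_inr enum_rank_ordE !card_sum card_prod !card_ord. Qed.
Lemma enum_rank_iL (k : 'I_S.-1) : (enum_rank (iL k) : nat) = (S + S * C + S + S + S + k)%N.
Proof. by rewrite enum_rank_inr enum_rank_ordE !card_sum card_prod !card_ord. Qed.

Lemma enum_rank_pair_lt (p : 'I_S * 'I_C) : (enum_rank p < S * C)%N.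
Proof.
have card_pair : #|{: 'I_S * 'I_C}| = (S * C)%N by rewrite card_prod !card_ord.
by rewrite -card_pair ltn_ord.
Qed.

Definition jac_entry (e : algv R) (r c : Idx S C) : R :=
  derive1 (fun h => g (pert e c h) r) 0.

Lemma aebal_congr_V (V1 V2 : nat -> R) ay aH aT axC aL j :
  V1 j = V2 j -> V1 j.-1 = V2 j.-1 ->
  aebal (AlgV V1 ay aH aT axC aL) j = aebal (AlgV V2 ay aH aT axC aL) j.
Proof.
move=> Ej Ej1; rewrite /Defs.aebal /=.
case: ifP => [/eqP j1 | _]; first by subst j; rewrite Ej.
by case: ifP => [/eqP jS | _]; [subst j|]; rewrite Ej Ej1.
Qed.

Lemma jac_entry_eq0 e r c : (enum_rank c < enum_rank r)%N -> jac_entry e r c = 0.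
Proof.
move=> lt_cr; have ne_rc : r != c by apply: contraTneq lt_cr => ->; rewrite ltnn.
rewrite /jac_entry; case: e => aV0 ay0 aH0 aT0 axC0 aL0; set F := fun h => _.
suff -> : F = cst (F 0) by rewrite derive1_cst.
apply/funext => h; rewrite {}/F /=; move: lt_cr ne_rc.
case: r => [[[[[k|[k i]]|k]|k]|k]|k]; case: c => [[[[[k'|[k' i']]|k']|k']|k']|k'];
  rewrite ?enum_rank_iV ?enum_rank_iy ?enum_rank_iH ?enum_rank_iT ?enum_rank_ixC
          ?enum_rank_iL => lt_cr ne_rc;
  try (have ? := ltn_ord k); try (have ? := ltn_ord k');
  try (have ? := enum_rank_pair_lt (k, i)); try (have ? := enum_rank_pair_lt (k', i'));
  try reflexivity; try (exfalso; lia).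
- have ne1 : (S - k == S - k')%N = false by lia.
  have ne2 : ((S - k).-1 == S - k')%N = false by lia.
  by rewrite /= (@aebal_congr_V _ aV0) ?(@aebal_congr_V (updn aV0 (S - k') 0) aV0)
     // /updn ?ne1 ?ne2.
- have ne : ((k.+1 == k'.+1) && (i.+1 == i'.+1)) = false.
    apply: contraNF ne_rc => /andP[]; rewrite !eqSS => /eqP kk /eqP ii.
    by rewrite (val_inj kk) (val_inj ii).
  by rewrite /= /ydef /= /updn2 /= ne.
all: have ne : (k.+1 == k'.+1)%N = false by lia.
all: by rewrite /= /edef /ysum /xsum /hold /updn /= ne.
Qed.

Lemma xrow_congr (e1 e2 : algv R) : axC e1 = axC e2 -> xrow e1 = xrow e2.
Proof. by rewrite /Defs.xrow => ->. Qed.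

Lemma jac_entry_y e p : jac_entry e (iy p) (iy p) = 1.
Proof.
case: p e => k i [aV0 ay0 aH0 aT0 axC0 aL0]; rewrite /jac_entry /= /ydef /= /updn2 !eqxx.
apply: (@derive1_affine _ _ (ay0 k.+1 i.+1 - fvle i P (aT0 k.+1)
  (xrow (AlgV aV0 ay0 aH0 aT0 axC0 aL0) k.+1))) => h.
by rewrite (@xrow_congr _ (AlgV aV0 ay0 aH0 aT0 axC0 aL0)) // mulr1 addrAC.
Qed.

Lemma jac_entry_H e k : jac_entry e (iH k) (iH k) = 1.
Proof.
case: e => aV0 ay0 aH0 aT0 axC0 aL0; rewrite /jac_entry /= /edef /= /updn eqxx.
apply: (@derive1_affine _ _ (aH0 k.+1 - n k.+1 * fhl (aT0 k.+1)
  (xrow (AlgV aV0 ay0 aH0 aT0 axC0 aL0) k.+1))) => h.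
by rewrite (@xrow_congr _ (AlgV aV0 ay0 aH0 aT0 axC0 aL0)) // mulr1 addrAC.
Qed.

Lemma jac_entry_xC e k : jac_entry e (ixC k) (ixC k) = 1.
Proof.
case: e => aV0 ay0 aH0 aT0 axC0 aL0; rewrite /jac_entry /= /xsum /= /updn eqxx.
apply: (@derive1_affine _ _ (axC0 k.+1 - 1 + \sum_(1 <= i < C) xh k.+1 i)) => h.
by rewrite mulr1; ring.
Qed.

Lemma jac_entry_T e k : jac_entry e (iT k) (iT k) = sdT fvle P (aT e k.+1) (xrow e k.+1).
Proof.
case: e => aV0 ay0 aH0 aT0 axC0 aL0; rewrite /jac_entry /= /ysum /= /updn eqxx.
rewrite /Defs.xrow /=; set x0 := \row_i _.
have dfvle i : derivable (fun T' => fvle i P T' x0) (aT0 k.+1) 1.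
  exact: C1_uncurry3_derivable_T.
rewrite /sdT /dT3 -(@derive1_sum _ _ (fun i T' => fvle i P T' x0)) //.
exact/derive1_shift_subr/derivable_sum_pointwise.
Qed.

Lemma jac_entry_L e k : jac_entry e (iL k) (iL k) = - derive1 fholdup (aL e k.+1).
Proof.
case: e => aV0 ay0 aH0 aT0 axC0 aL0; rewrite /jac_entry /= /hold /= /updn eqxx.
exact: derive1_shift_subl.
Qed.

Lemma dotvD (a u v : 'rV[R]_C) : dotv a (u + v) = dotv a u + dotv a v.
Proof. by rewrite /dotv -big_split; apply: eq_bigr => i _; rewrite mxE mulrDr. Qed.
Lemma dotvN (a u : 'rV[R]_C) : dotv a (- u) = - dotv a u.
Proof. by rewrite /dotv -sumrN; apply: eq_bigr => i _; rewrite mxE mulrN. Qed.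
Lemma dotvZ (a u : 'rV[R]_C) c : dotv a (c *: u) = c * dotv a u.
Proof. by rewrite /dotv mulr_sumr; apply: eq_bigr => i _; rewrite mxE mulrCA. Qed.

Definition aebal_dV (e : algv R) (j : nat) : R :=
  if j == S then
    - eps * fhl (aT e S) (xrow e S)
    - eps * dotv (avec fvle fhl P (aT e S) (xrow e S)) (yrow e S - xrow e S)
    - (1 - eps) * fhl Tc (yrow e S) + fhv (aT e S) (yrow e S)
  else
    - fhl (aT e j) (xrow e j)
    - dotv (avec fvle fhl P (aT e j) (xrow e j)) (yrow e j - xrow e j)
    + fhv (aT e j) (yrow e j).

Lemma aebal_affine_V aV ay aH aT axC aL j h : (1 <= j <= S)%N ->
  aebal (AlgV (updn aV j h) ay aH aT axC aL) j =
  aebal (AlgV aV ay aH aT axC aL) j + h * aebal_dV (AlgV aV ay aH aT axC aL) j.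
Proof.
move=> /andP[j_ge1 j_leS]; rewrite /Defs.aebal /aebal_dV /Defs.xrow /Defs.yrow /= /updn.
case: ifP => [/eqP j1 | j_ne1].
  subst j; have -> : (1 == S)%N = false by lia.
  by rewrite eqxx !(dotvD, dotvN, dotvZ); ring.
case: ifP => [/eqP jS | j_neS].
  subst j; have -> : (S.-1 == S)%N = false by lia.
  by rewrite eqxx !(dotvD, dotvN, dotvZ); ring.
have -> : (j.-1 == j)%N = false by lia.
by rewrite eqxx !(dotvD, dotvN, dotvZ); ring.
Qed.

Lemma jac_entry_V e k : jac_entry e (iV k) (iV k) = aebal_dV e (S - k).
Proof.
case: e => aV0 ay0 aH0 aT0 axC0 aL0; rewrite /jac_entry /=.
apply: (@derive1_affine _ _ (aebal (AlgV aV0 ay0 aH0 aT0 axC0 aL0) (S - k))) => h.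
by rewrite aebal_affine_V //; have := ltn_ord k; lia.
Qed.

Lemma det_jac e :
  \det (jac S fvle fhl fhv fholdup eps P Q Tc Pdot n xh e) = \prod_r jac_entry e r r.
Proof. exact: det_enum_trig (jac_entry_eq0 e). Qed.

Lemma det_jac_neq0 e :
  (forall k : 'I_S, sdT fvle P (aT e k.+1) (xrow e k.+1) != 0) ->
  (forall k : 'I_S.-1, derive1 fholdup (aL e k.+1) != 0) ->
  \det (jac S fvle fhl fhv fholdup eps P Q Tc Pdot n xh e) != 0 <->
  forall j, (1 <= j <= S)%N -> aebal_dV e j != 0.
Proof.
move=> sdT_neq0 holdup'_neq0; rewrite det_jac; split.
- move=> /prodf_neq0 diag_neq0 j /andP[j_ge1 j_leS].
  have lt_k : (S - j < S)%N by lia.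
  by have := diag_neq0 (iV (Ordinal lt_k)) isT; rewrite jac_entry_V /= subKn.
- move=> dV_neq0; apply/prodf_neq0 => -[[[[[k|p]|k]|k]|k]|k] _.
  + by rewrite jac_entry_V dV_neq0 //; have := ltn_ord k; lia.
  + by rewrite jac_entry_y oner_neq0.
  + by rewrite jac_entry_H oner_neq0.
  + by rewrite jac_entry_T.
  + by rewrite jac_entry_xC oner_neq0.
  + by rewrite jac_entry_L oppr_eq0.
Qed.

End Column.

Theorem mainTheorem10 (R : realType) (S C : nat) (hS : (2 <= S)%N) (hC : (2 <= C)%N)
  (I : set R) (hI : is_interval I)
  (fvle : 'I_C -> R -> R -> 'rV[R]_C -> R) (fhl fhv : R -> 'rV[R]_C -> R)
  (fholdup : R -> R)
  (hvle : forall i : 'I_C, C2 (uncurry3 (fvle i)))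
  (hhl : C2 (uncurry2 fhl)) (hhv : C1 (uncurry2 fhv)) (hhold : C1fun fholdup)
  (eps P Q Tc : R -> R)
  (heps : C1_on I eps) (hP : C1_on I P) (hQ : C1_on I Q) (hTc : C1_on I Tc)
  (n V H T L : nat -> R -> R) (x y : nat -> nat -> R -> R)
  (hsol : is_solution S fvle fhl fhv fholdup I eps P Q Tc n V H T L x y)
  (hL : forall t, I t -> forall j, (1 <= j <= S.-1)%N -> derive1 fholdup (L j t) != 0)
  (hsum : forall t, I t -> forall j, (1 <= j <= S)%N ->
     sdT fvle (P t) (T j t) (xvec C x j t) != 0) :
  (forall t, I t ->
     \det (jac_at S fvle fhl fhv fholdup I eps P Q Tc n V H T L x y t) != 0) <->
  (forall t, I t ->
     - eps t * fhl (T S t) (xvec C x S t)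
     - eps t * dotv (avec fvle fhl (P t) (T S t) (xvec C x S t)) (yvec C y S t - xvec C x S t)
     - (1 - eps t) * fhl (Tc t) (yvec C y S t) + fhv (T S t) (yvec C y S t) != 0
   /\ (forall j, (1 <= j <= S.-1)%N ->
     - fhl (T j t) (xvec C x j t)
     - dotv (avec fvle fhl (P t) (T j t) (xvec C x j t)) (yvec C y j t - xvec C x j t)
     + fhv (T j t) (yvec C y j t) != 0)).
Proof.
have xrowE j t : Defs.xrow C (x_at x t) (alg_at C V H T L x y t) j = xvec C x j t.
  by apply/rowP => i; rewrite !mxE; case: eqP => [->|].
have yrowE j t : yrow C (alg_at C V H T L x y t) j = yvec C y j t.
  by apply/rowP => i; rewrite !mxE.
have det_iff t : I t ->
  \det (jac_at S fvle fhl fhv fholdup I eps P Q Tc n V H T L x y t) != 0 <->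
  forall j, (1 <= j <= S)%N -> aebal_dV S fvle fhl fhv (eps t) (P t) (Tc t)
                                 (x_at x t) (alg_at C V H T L x y t) j != 0.
  move=> It; apply: det_jac_neq0 => //.
  - by move=> i; case: (hvle i).
  - by case: hhold.
  - by move=> k; rewrite xrowE; apply: hsum => //; have := ltn_ord k; lia.
  - by move=> k; apply: hL => //; have := ltn_ord k; lia.
split=> [det_neq0 t It | cond t It].
- have /(det_iff t It) dV_neq0 := det_neq0 t It; split=> [|j j_lt].
  + by have := dV_neq0 S; rewrite /aebal_dV eqxx !xrowE !yrowE; apply; lia.
  + have := dV_neq0 j; rewrite /aebal_dV ifN_eq ?xrowE ?yrowE; last by lia.
    by apply; lia.
- apply/(det_iff t It) => j /andP[j_ge1 j_leS]; rewrite /aebal_dV !xrowE !yrowE.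
  case: ifP => [_ | /negbT j_neS]; first exact: (cond t It).1.
  by apply: (cond t It).2; lia.
Qed.
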